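(* If $(U,\le)$ is an $\mathrm{OST}$-monoid, then addition in the semiring $U$ is compatible with the ordering: for all $x,y,z\in U$, $x\le y$ implies $x+z\le y+z$.
   Context: A supertropical monoid is a commutative monoid $(U,\cdot)$ with absorbing element $0$ and distinguished idempotent $e$ with $ex=0\Rightarrow x=0$, together with a total ordering $\le_M$ on $M:=eU$, compatible with multiplication and with $0$ least, making $M$ a bipotent semiring. The addition on $U$ is $x+y:=y$ if $ex<ey$, $x$ if $ex>ey$, $ex$ if $ex=ey$ (for OST-monoids this makes $U$ a semiring). An OST-monoid is a supertropical monoid $U$ with a total ordering $\le$ on $U$ such that: (OST1) $x\le y\Rightarrow xz\le yz$; (OST2) for $x,y\in M$, $x\le y\Leftrightarrow x\le_M y$; (OST3) $0\le1\le e$. *)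

From mathcomp Require Import all_boot.
Set Implicit Arguments. Unset Strict Implicit. Unset Printing Implicit Defensive.

Section Supertropical.
Variable U : Type.
Variables (mul : U -> U -> U) (one zero e : U).

Definition inM (x : U) : Prop := exists y, x = mul e y.

Definition supertropical_monoid (leM : rel U) : Prop :=
  [/\ (forall x y z, mul x (mul y z) = mul (mul x y) z),
      (forall x y, mul x y = mul y x),
      (forall x, mul one x = x),
      (forall x, mul zero x = zero) &
      (mul e e = e /\ (forall x, mul e x = zero -> x = zero))] /\
      [/\ (forall x, inM x -> leM x x),
          (forall x y, inM x -> inM y -> leM x y -> leM y x -> x = y),
          (forall x y z, inM x -> inM y -> inM z -> leM x y -> leM y z -> leM x z) &
          (forall x y, inM x -> inM y -> leM x y || leM y x)] /\
      [/\
          (forall x y z, inM x -> inM y -> inM z -> leM x y -> leM (mul x z) (mul y z)) &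
          (forall x, inM x -> leM zero x)].

Definition ltM (leM : rel U) (x y : U) : bool := leM x y && ~~ leM y x.

Definition sadd (leM : rel U) (x y : U) : U :=
  if ltM leM (mul e x) (mul e y) then y
  else if ltM leM (mul e y) (mul e x) then x
  else mul e x.

Definition OST_monoid (leM le : rel U) : Prop :=
  [/\ supertropical_monoid leM,
      [/\ (forall x, le x x),
          (forall x y, le x y -> le y x -> x = y),
          (forall x y z, le x y -> le y z -> le x z) &
          (forall x y, le x y || le y x)],
      (forall x y z, le x y -> le (mul x z) (mul y z)),
      (forall x y, inM x -> inM y -> le x y = leM x y) &
      le zero one && le one e].

End Supertropical.

(* Multiplication by [e] is monotone and idempotent, and [u <= eu] by OST3.
   Hence a ghost [ez] strictly below [ey] also lies below [y] itself, since
   otherwise [ey <= eez = ez].  Given [ex <= ey], compare both with [ez]: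
   when [ey < ez] both sums are [z]; when [ey = ez] the right sum is [ez] and
   the left one is [z] or [ex], both below [ez]; when [ez < ey] the right sum
   is [y], and the left one is [x] or lies below [ez <= y]. *)
From Pilot Require Import Defs.
From mathcomp Require Import all_boot.

Set Implicit Arguments. Unset Strict Implicit. Unset Printing Implicit Defensive.

Section GhostOrder.

Variables (U : Type) (mul : U -> U -> U) (e : U) (leM le : rel U).

Local Notation ghost := (mul e).
Local Notation sadd := (sadd mul e leM).

Hypothesis le_anti : antisymmetric le.
Hypothesis le_trans : transitive le.
Hypothesis le_total : total le.
Hypothesis le_ghost : forall u, le u (ghost u).
Hypothesis ghost_mono : forall u v, le u v -> le (ghost u) (ghost v).
Hypothesis ghostK : forall u, ghost (ghost u) = ghost u.
Hypothesis leM_ghost : forall u v, leM (ghost u) (ghost v) = le (ghost u) (ghost v).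

Lemma le_refl u : le u u.
Proof. by have /orP[] := le_total u u. Qed.

Lemma ltM_ghost u v : ltM leM (ghost u) (ghost v) = ~~ le (ghost v) (ghost u).
Proof.
rewrite /ltM !leM_ghost; case: (boolP (le (ghost v) (ghost u))) => [_ | Nvu].
  by rewrite andbF.
by rewrite andbT; have /orP[] := le_total (ghost u) (ghost v); rewrite ?(negbTE Nvu).
Qed.

Lemma sadd_ghost_lt x z : ~~ le (ghost z) (ghost x) -> sadd x z = z.
Proof. by rewrite /Defs.sadd ltM_ghost => ->. Qed.

Lemma sadd_ghost_gt x z : ~~ le (ghost x) (ghost z) -> sadd x z = x.
Proof.
move=> Nxz; rewrite /Defs.sadd !ltM_ghost Nxz /=.
by have /orP[] := le_total (ghost x) (ghost z); rewrite ?(negbTE Nxz) // => ->.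
Qed.

Lemma sadd_ghost_eq x z : ghost x = ghost z -> sadd x z = ghost x.
Proof. by move=> exz; rewrite /Defs.sadd !ltM_ghost exz le_refl. Qed.

Lemma ghost_lt_le u v : ~~ le (ghost v) (ghost u) -> le (ghost u) v.
Proof.
move=> Nvu; have /orP[// | vle] := le_total (ghost u) v.
by move: (ghost_mono vle); rewrite ghostK (negbTE Nvu).
Qed.

Lemma sadd_le_ghost x z : le (ghost x) (ghost z) -> le (sadd x z) (ghost z).
Proof.
move=> xz; case: (boolP (le (ghost z) (ghost x))) => [zx | Nzx].
  have exz : ghost x = ghost z by apply: le_anti; rewrite xz zx.
  by rewrite sadd_ghost_eq // exz le_refl.
by rewrite sadd_ghost_lt // le_ghost.
Qed.

Lemma sadd_le_of_ghost_lt x y z :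
  le x y -> ~~ le (ghost y) (ghost z) -> le (sadd x z) y.
Proof.
move=> xy Nyz; case: (boolP (le (ghost x) (ghost z))) => [xz | Nxz].
  exact: le_trans _ _ _ (sadd_le_ghost xz) (ghost_lt_le Nyz).
by rewrite sadd_ghost_gt.
Qed.

Lemma le_sadd2r x y z : le x y -> le (sadd x z) (sadd y z).
Proof.
move=> xy; have exy := ghost_mono xy.
case: (boolP (le (ghost z) (ghost y))) => [zy | Nzy]; last first.
  have Nzx : ~~ le (ghost z) (ghost x).
    by apply: contra Nzy => zx; exact: le_trans _ _ _ zx exy.
  by rewrite !sadd_ghost_lt ?le_refl.
case: (boolP (le (ghost y) (ghost z))) => [yz | Nyz].
  have eyz : ghost y = ghost z by apply: le_anti; rewrite yz zy.
  by rewrite (sadd_ghost_eq eyz) eyz sadd_le_ghost // -eyz.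
by rewrite (sadd_ghost_gt Nyz) sadd_le_of_ghost_lt.
Qed.

End GhostOrder.

Theorem theorem61p5 (U : Type) (mul : U -> U -> U) (one zero e : U)
    (leM le : rel U) :
  OST_monoid mul one zero e leM le ->
  forall x y z : U, le x y ->
    le (sadd mul e leM x z) (sadd mul e leM y z).
Proof.
move=> [[[mulA mulC mul1 _ [mulee _]] _] [_ le_anti le_trans le_total] ost1 ost2].
move=> /andP[_ le1e].
apply: le_sadd2r.
- by move=> u v /andP[]; exact: le_anti.
- by move=> v u w; exact: le_trans.
- exact: le_total.
- by move=> u; rewrite -{1}[u]mul1; exact: ost1.
- by move=> u v uv; rewrite ![mul e _]mulC; exact: ost1.
- by move=> u; rewrite mulA mulee.
- by move=> u v; rewrite ost2 //; [exists u | exists v].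
Qed.
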